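(* Let $P_{\mathcal{F}}$ be the probability measure on $\mathscr{P}(2^\omega)$ which is the distribution of $\lambda\circ F_x^{-1}$ when $x\in3^\omega$ is drawn according to $\lambda_3$. Then $P_{\mathcal{F}}$ has barycenter $\lambda$, i.e. for every $\sigma\in2^{<\omega}$, $$\lambda(\llbracket\sigma\rrbracket)=\int_{\mathscr{P}(2^\omega)}\mu(\llbracket\sigma\rrbracket)\,dP_{\mathcal{F}}(\mu),$$ equivalently $\int_{3^\omega}\lambda(F_x^{-1}(\llbracket\sigma\rrbracket))\,d\lambda_3(x)=2^{-|\sigma|}$.
   Context: $\lambda$ is the uniform measure on $2^\omega$ and $\lambda_3$ the uniform measure on $3^\omega$ ($\lambda_3(\llbracket\sigma\rrbracket)=3^{-|\sigma|}$). Let $\sigma_0=\epsilon,\sigma_1=0,\sigma_2=1,\dots$ be the length-lexicographic enumeration of $2^{<\omega}$. For $x\in3^\omega$ label node $\sigma_i$ ($i\ge1$) by $\ell_x(\sigma_i)=x(i-1)$, and let $F_x(y)$ be the sequence obtained from $\ell_x(y\restriction1),\ell_x(y\restriction2),\dots$ by deleting all $2$'s (undefined if only finitely many entries remain). For $\lambda_3$-almost every $x$, $F_x$ is total, so $\lambda\circ F_x^{-1}$ is a Borel probability measure on $2^\omega$. *)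

From HB Require Import structures.
From mathcomp Require Import all_boot all_order all_algebra.
From mathcomp Require Import all_classical all_reals all_analysis.
Set Implicit Arguments. Unset Strict Implicit. Unset Printing Implicit Defensive.
Import Order.TTheory GRing.Theory Num.Theory.
Local Open Scope classical_set_scope.

Definition three := 'I_3.
HB.instance Definition _ := Finite.on three.
HB.instance Definition _ := isPointed.Build three (@ord0 2).

Definition cyl {A : Type} (d : A) (s : seq A) : set (nat -> A) :=
  [set y | forall i, (i < size s)%N -> y i = nth d s i].

Definition cylinders2 : set (set (nat -> bool)) := [set cyl false s | s in [set: seq bool]].
Definition cylinders3 : set (set (nat -> three)) :=
  [set cyl (@ord0 2 : three) s | s in [set: seq three]].

(* 2^omega and 3^omega with the sigma-algebra generated by cylinders
   (= Borel sigma-algebra of the product topology). *)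
Definition Cantor2 := g_sigma_algebraType cylinders2.
Definition Cantor3 := g_sigma_algebraType cylinders3.

(* Length-lexicographic index of a binary word: sigma_0 = eps, sigma_1 = 0,
   sigma_2 = 1, sigma_3 = 00, ...; the index of s is 2^|s| - 1 + (s read in binary). *)
Definition binval (s : seq bool) : nat := foldl (fun acc (b : bool) => acc.*2 + b) 0 s.
Definition node_index (s : seq bool) : nat := (2 ^ size s - 1 + binval s)%N.

Definition ell (x : nat -> three) (s : seq bool) : three := x (node_index s).-1.

(* The label sequence ell_x(y|1), ell_x(y|2), ... (indexed from 0). *)
Definition labels (x : nat -> three) (y : nat -> bool) : nat -> three :=
  fun n => ell x (mkseq y n.+1).

(* delete2 s z : z is the sequence obtained from s by deleting all 2's, and
   infinitely many entries remain (g enumerates increasingly the positions of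
   the non-2 entries; 0 is read as false, 1 as true). *)
Definition delete2 (s : nat -> three) (z : nat -> bool) : Prop :=
  exists g : nat -> nat,
    (forall n, (g n < g n.+1)%N) /\
    (forall k, (nat_of_ord (s k) != 2%N) <-> exists n, g n = k) /\
    (forall n, z n = (nat_of_ord (s (g n)) == 1%N)).

(* F_x(y) = z  (F_x is partial). *)
Definition F_rel (x : nat -> three) (y : nat -> bool) (z : nat -> bool) : Prop :=
  delete2 (labels x y) z.

Definition F_preimage (x : nat -> three) (sigma : seq bool) : set Cantor2 :=
  [set y | exists z, F_rel x y z /\ cyl false sigma z].

(* For fixed y, the labels met along y are x(i_0), x(i_1), ... for a strictly increasing
   sequence of indices i_n (length-lexicographic indices grow along a branch), and
   restricting x to a strictly increasing set of coordinates preserves the uniform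
   measure on 3^omega.  So for every y the set of x with F_x(y) in [[sigma]] has the
   measure of D(sigma), the set of ternary sequences with infinitely many letters
   other than 2 whose 2-erasure begins with sigma; by Tonelli the integral equals
   lambda_3(D(sigma)).  Splitting D(b sigma) on the first letter gives
   lambda_3(D(b sigma)) = lambda_3(D(b sigma))/3 + lambda_3(D(sigma))/3, i.e. each bit
   halves the measure, and lambda_3(D(eps)) = 1 since the eventually-2 sequences form
   a null set. *)

From HB Require Import structures.
From mathcomp Require Import all_boot all_order all_algebra.
From mathcomp Require Import all_classical all_reals all_analysis.
From mathcomp Require Import zify ring lra.
Import Order.TTheory GRing.Theory Num.Theory.
Import numFieldNormedType.Exports.
Local Open Scope classical_set_scope.
Set Implicit Arguments. Unset Strict Implicit. Unset Printing Implicit Defensive.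

(* Alphabets: the distinguished letter is the default of [cyl] and makes [nat -> A]
   pointed, as measurable types require. *)
HB.structure Definition PointedFinite := {A of Pointed A & Finite A}.
Notation pointedFinType := PointedFinite.type.
HB.saturate three.
HB.saturate bool.

Lemma cylP (A : Type) (d : A) t x : cyl d t x <-> mkseq x (size t) = t.
Proof.
split => [xt|<- i]; last by rewrite size_mkseq => it; rewrite nth_mkseq.
by apply: (@eq_from_nth _ d) => [|i]; rewrite size_mkseq // => it; rewrite nth_mkseq ?xt.
Qed.

Section words.
Variable A : pointedFinType.

Definition cylinders : set (set (nat -> A)) := [set cyl point t | t in [set: seq A]].
(* [words three] and [words bool] are convertible to [Cantor3] and [Cantor2]. *)
Definition words := g_sigma_algebraType cylinders.

Lemma measurable_cyl t : measurable (cyl point t : set words).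
Proof. by apply: sub_sigma_algebra; exists t. Qed.

Lemma measurable_finitely_determined (Q : set (nat -> A)) m :
  (forall x y, (forall i, (i < m)%N -> x i = y i) -> Q x -> Q y) ->
  measurable (Q : set words).
Proof.
move=> Qm.
pose W (t : seq A) : set words :=
  if `[< size t = m /\ Q (nth point t) >] then cyl point t else set0.
have -> : (Q : set words) = \bigcup_t W t.
  apply/seteqP; split => [x Qx|x [t _]].
    exists (mkseq x m) => //; rewrite /W size_mkseq asboolT.
      by move=> i; rewrite size_mkseq => im; rewrite nth_mkseq.
    by split => //; apply: (Qm x) Qx => i im; rewrite nth_mkseq.
  rewrite /W; case: asboolP => // -[st Qt] xt.
  by apply: (Qm _ _ _ Qt) => i it; rewrite xt // st.
apply: countable_bigcupT_measurable; first exact: countableP.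
by move=> t; rewrite /W; case: asboolP => _; [exact: measurable_cyl | exact: measurable0].
Qed.

Definition precomp (iota : nat -> nat) (x : words) : words := fun n => x (iota n).

Lemma measurable_precomp iota : measurable_fun setT (precomp iota).
Proof.
apply: (@measurability _ _ words words setT _ cylinders erefl) => _ [_ [t _ <-] <-]; rewrite setTI.
have -> : precomp iota @^-1` cyl point t =
    \bigcap_i [set x : words | (i < size t)%N -> x (iota i) = nth point t i].
  by apply/seteqP; split => x xt i => [_|]; exact: xt.
apply: bigcapT_measurable => i.
by apply: (@measurable_finitely_determined _ (iota i).+1) => x y xy xt it; rewrite -xy ?xt.
Qed.

Lemma cylI_prefix (s t : seq A) : (size s <= size t)%N ->
  cyl point s `&` cyl point t = cyl point t \/ cyl point s `&` cyl point t = set0.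
Proof.
move=> st.
have [eq_st|neq_st] := pselect (forall i, (i < size s)%N -> nth point s i = nth point t i).
  left; apply/seteqP; split => [x [] //|x xt]; split => // i si.
  by rewrite xt ?eq_st // (leq_trans si).
right; apply/seteqP; split => // x [xs xt]; apply: neq_st => i si.
by rewrite -xs // xt // (leq_trans si).
Qed.

Lemma eq_measure_cyl (R : realType) (m1 m2 : measure words R) :
  (m1 setT < +oo)%E -> (forall t, m1 (cyl point t) = m2 (cyl point t)) ->
  forall X, measurable X -> m1 X = m2 X.
Proof.
move=> m1T m12 X mX.
pose G : set (set words) := [set Y | Y = set0 \/ cylinders Y].
apply: (measure_unique G (fun=> setT)) => //.
- apply/seteqP; split; apply: smallest_sub.
  + exact: smallest_sigma_algebra.
  + by move=> _ [t _ <-]; apply: sub_sigma_algebra; right; exists t.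
  + exact: sigma_algebra_measurable.
  + by move=> Y [->|[t _ <-]]; [exact: measurable0 | exact: measurable_cyl].
- move=> Y Z [->|[s _ <-]]; first by rewrite set0I; left.
  move=> [->|[t _ <-]]; first by rewrite setI0; left.
  have [st|/ltnW ts] := leqP (size s) (size t).
    by case: (cylI_prefix st) => ->; [right; exists t | left].
  by rewrite setIC; case: (cylI_prefix ts) => ->; [right; exists s | left].
- by move=> _; right; exists [::] => //; apply/seteqP.
- by rewrite bigcup_const.
- by move=> Y [->|[t _ <-]]; rewrite ?measure0.
Qed.

Lemma measurable_eventually_const (a : A) N :
  measurable ([set x | forall n, (N <= n)%N -> x n = a] : set words).
Proof.
rewrite [X in measurable X](_ : _ = \bigcap_n [set x : words | (N <= n)%N -> x n = a]).
  apply: bigcapT_measurable => n.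
  by apply: (@measurable_finitely_determined _ n.+1) => x y xy xn Nn; rewrite -xy ?xn.
by apply/seteqP; split => x xa n => [_|]; exact: xa.
Qed.

End words.

HB.instance Definition _ (A : pointedFinType) iota :=
  isMeasurableFun.Build _ _ _ _ (@precomp A iota) (@measurable_precomp A iota).

Lemma measurable_precomp_prod (A : pointedFinType) d (T : measurableType d)
    (f : T -> nat -> nat) : (forall n k, measurable [set y | f y n = k]) ->
  measurable_fun setT (fun p : words A * T => precomp (f p.2) p.1).
Proof.
move=> mf; apply: (@measurability _ _ (words A * T)%type (words A) setT _ (@cylinders A) erefl).
move=> _ [_ [t _ <-] <-]; rewrite setTI.
have -> : (fun p : words A * T => precomp (f p.2) p.1) @^-1` cyl point t =
    \bigcap_i \bigcup_k ([set x : words A | (i < size t)%N -> x k = nth point t i] `*`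
                         [set y | f y i = k]).
  apply/seteqP; split => [[x y] xyt i _|[x y] xyt i it].
    by exists (f y i) => //; split => //= it; exact: xyt.
  by have [k _ [/= xk fk]] := xyt i I; rewrite /precomp fk xk.
apply: bigcapT_measurable => i; apply: bigcupT_measurable => k; apply: measurableX (mf i k).
by apply: (@measurable_finitely_determined _ _ k.+1) => x y xy xk it; rewrite -xy ?xk.
Qed.

Lemma ler0_expr_bound (R : realType) (q x : R) :
  (`|q| < 1 -> (forall m, x <= q ^+ m) -> x <= 0)%R.
Proof.
move=> q_lt1 x_le; have cvg0 : (GRing.exp q : R^nat) @ \oo --> 0%R by exact: cvg_expr.
rewrite -(cvg_lim _ cvg0) //; apply: limr_ge; first exact: cvgP cvg0.
by near=> m; exact: x_le.
Unshelve. all: by end_near.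
Qed.

Section uniform_measure.
Local Open Scope ereal_scope.
Variables (A : pointedFinType) (R : realType) (mu : probability (words A) R).
Implicit Types (X : set (words A)) (t : seq A).
Local Notation k := (#|A|%:R : R)%R.
Hypothesis mu_cyl : forall t, mu (cyl point t) = (k ^- size t)%R%:E.

Definition starts_with (a : A) : set (words A) := [set x | x 0%N = a].

Lemma measurable_starts_with a : measurable (starts_with a).
Proof.
rewrite [starts_with a](_ : _ = cyl point [:: a]); first exact: measurable_cyl.
by apply/seteqP; split => x /= xa => [[|i]//|]; exact: (xa 0%N).
Qed.

Lemma measurable_precomp_preimage iota X :
  measurable X -> measurable (precomp iota @^-1` X).
Proof. by move=> mX; rewrite -[_ @^-1` _]setTI; exact: measurable_precomp. Qed.

Lemma mu_starts_with_shift a X : measurable X ->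
  mu (starts_with a `&` precomp succn @^-1` X) = (k^-1)%:E * mu X.
Proof.
move=> mX; rewrite setIC.
pose mu_a := pushforward (mrestr mu (measurable_starts_with a)) (precomp succn).
apply: (@eq_measure_cyl _ _ mu_a (mscale (k^-1)%:nng%R mu)) => // [|t].
  by rewrite /mu_a /pushforward /mrestr (le_lt_trans (probability_le1 _ _)) ?ltey //;
    apply: measurableI; [exact: measurable_precomp_preimage | exact: measurable_starts_with].
change (mu (precomp succn @^-1` cyl point t `&` starts_with a) = (k^-1)%:E * mu (cyl point t)).
have -> : precomp succn @^-1` cyl point t `&` starts_with a = cyl point (a :: t).
  apply/seteqP; split => [x [xt xa] [|i]//= it|x xat]; first exact: xt.
  by split; [move=> i it; exact: (xat i.+1) | exact: (xat 0%N)].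
by rewrite !mu_cyl -EFinM /= exprS invfM.
Qed.

Lemma card_gt0_pointed : (0 < #|A|)%N.
Proof. by apply/card_gt0P; exists point. Qed.

Lemma mu_shift X : measurable X -> mu (precomp succn @^-1` X) = mu X.
Proof.
move=> mX; set S := precomp succn @^-1` X.
have mS : measurable S by exact: measurable_precomp_preimage.
pose F (i : 'I_#|A|) := starts_with (enum_val i) `&` S.
have mF i : measurable (F i) by apply: measurableI => //; exact: measurable_starts_with.
have -> : S = \big[setU/set0]_(i < #|A|) F i.
  rewrite -bigcup_seq; apply/seteqP; split => [x Sx|x [i _ []] //].
  exists (enum_rank (x 0%N)); first by rewrite /= mem_index_enum.
  by split => //; rewrite /starts_with /= enum_rankK.
rewrite measure_bigsetU_ord //; last first.
  apply/trivIsetP => i j _ _ ij; apply/seteqP; split => // x [[xi _] [xj _]].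
  by move: ij; rewrite -(inj_eq enum_val_inj) /starts_with /= -xi -xj eqxx.
rewrite (eq_bigr (fun=> (k^-1)%:E * mu X)) => [|i _]; last exact: mu_starts_with_shift.
rewrite -(fineK (fin_num_measure mu _ mX)) -EFinM sumEFin sumr_const card_ord.
by rewrite -mulrnAl -(mulr_natr k^-1) mulVf ?mul1r // pnatr_eq0 -lt0n card_gt0_pointed.
Qed.

Lemma precomp_predE iota (x : words A) : (forall j, (0 < iota j)%N) ->
  precomp iota x = precomp (predn \o iota) (precomp succn x).
Proof. by move=> iota_gt0; apply/funext => j; rewrite /precomp /= prednK. Qed.

Lemma mu_precomp_cyl iota t : (forall n, (iota n < iota n.+1)%N) ->
  mu (precomp iota @^-1` cyl point t) = (k ^- size t)%:E.
Proof.
elim: t iota => [|a t IHt] iota iota_lt.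
  rewrite [_ @^-1` _](_ : _ = setT) ?probability_setT ?expr0 ?invr1 //.
  by apply/seteqP; split => x.
have iota_mono := homo_ltn ltn_trans iota_lt.
move iota0: (iota 0%N) => n.
elim: n iota iota0 iota_lt iota_mono => [|n IHn] iota iota0 iota_lt iota_mono.
  pose iota' := predn \o iota \o succn.
  have iota'_lt j : (iota' j < iota' j.+1)%N.
    by rewrite /iota' /=; have := iota_lt j.+1; have := iota_mono 0%N j.+1 isT; lia.
  have -> : precomp iota @^-1` cyl point (a :: t) =
      starts_with a `&` precomp succn @^-1` (precomp iota' @^-1` cyl point t).
    apply/seteqP; split => x /=.
    - move=> xat; split; first by have := xat 0%N isT; rewrite /precomp iota0.
      rewrite -precomp_predE => [i it|j]; first exact: (xat i.+1).
      by have := iota_mono 0%N j.+1 isT; lia.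
    - rewrite -precomp_predE => [[xa xt] [|i] /= it|j]; first by rewrite /precomp iota0.
        exact: xt.
      by have := iota_mono 0%N j.+1 isT; lia.
  rewrite mu_starts_with_shift; last exact: measurable_precomp_preimage (measurable_cyl _).
  by rewrite IHt // /= exprS invfM EFinM.
have iota_gt0 j : (0 < iota j)%N.
  by case: j => [|j]; [rewrite iota0 | have := iota_mono 0%N j.+1 isT; lia].
have -> : precomp iota @^-1` cyl point (a :: t) =
    precomp succn @^-1` (precomp (predn \o iota) @^-1` cyl point (a :: t)).
  by apply/seteqP; split => x /=; rewrite -precomp_predE.
rewrite mu_shift; last exact: measurable_precomp_preimage (measurable_cyl _).
apply: IHn => [|j|i j ij] /=; first by rewrite iota0.
  by have := iota_lt j; have := iota_gt0 j; lia.
by have := iota_mono i j ij; have := iota_gt0 i; lia.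
Qed.

Lemma mu_precomp iota X : (forall n, (iota n < iota n.+1)%N) ->
  measurable X -> mu (precomp iota @^-1` X) = mu X.
Proof.
move=> iota_lt; apply: (@eq_measure_cyl _ _ (pushforward mu (precomp iota)) mu).
  by change (mu (precomp iota @^-1` setT) < +oo); rewrite preimage_setT probability_setT ltey.
by move=> t; exact: etrans (mu_precomp_cyl t iota_lt) (esym (mu_cyl t)).
Qed.

Lemma mu_eventually_const a N : (1 < #|A|)%N ->
  mu [set x | forall n, (N <= n)%N -> x n = a] = 0.
Proof.
move=> A_gt1; set Z : set (words A) := [set x | _].
have mZ : measurable Z := measurable_eventually_const a N.
have Z_le m : (fine (mu Z) <= (k^-1) ^+ m)%R.
  rewrite -lee_fin fineK ?fin_num_measure // exprVn -(size_nseq m a).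
  have addN_lt n : (N + n < N + n.+1)%N by rewrite addnS.
  rewrite -(@mu_precomp_cyl (addn N) _ addN_lt) le_measure ?inE //.
  - exact: measurable_precomp_preimage (measurable_cyl _).
  - by move=> x xa i; rewrite size_nseq nth_nseq => ->; rewrite /precomp xa ?leq_addr.
rewrite -(fineK (fin_num_measure mu _ mZ)); congr EFin; apply/eqP.
rewrite eq_le fine_ge0 ?measure_ge0 // andbT; apply: ler0_expr_bound Z_le.
have k_gt1 : (1 < k)%R by rewrite ltr1n.
by rewrite ger0_norm ?invr_ge0 ?ler0n // invf_lt1 // (lt_trans ltr01).
Qed.

End uniform_measure.

Section enumeration.
Variables (p : pred nat) (g : nat -> nat).
Hypotheses (g_lt : forall n, (g n < g n.+1)%N) (gP : forall i, p i <-> exists n, g n = i).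

Let g_mono : {mono g : m n / (m <= n)%N} := leq_mono (homo_ltn ltn_trans g_lt).

Lemma enum_below i : (i < g 0)%N -> ~~ p i.
Proof. by move=> ig; apply/negP => /gP[m gm]; move: ig; rewrite -gm ltnNge g_mono. Qed.

Lemma enum_gap n i : (g n < i < g n.+1)%N -> ~~ p i.
Proof.
move=> /andP[gni ign]; apply/negP => /gP[m gm]; move: gni ign.
by rewrite -gm !ltnNge !g_mono -!ltnNge => nm; rewrite ltnNge nm.
Qed.

Lemma filter_iota_enum n : [seq i <- iota 0 (g n) | p i] = mkseq g n.
Proof.
elim: n => [|n IHn].
  rewrite (@eq_in_filter _ _ pred0) ?filter_pred0 // => i.
  by rewrite mem_iota => /andP[_] /enum_below/negbTE.
rewrite -(subnKC (ltnW (g_lt n))) iotaD filter_cat IHn mkseqS -cats1 add0n.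
rewrite -[(g n.+1 - g n)%N]prednK ?subn_gt0 //= (_ : p (g n)); last by apply/gP; exists n.
rewrite (@eq_in_filter _ _ pred0) ?filter_pred0 // => i.
rewrite mem_iota addSn -addnS prednK ?subn_gt0 // subnKC ?(ltnW (g_lt n)) // => gni.
exact/negbTE/(@enum_gap n).
Qed.

Lemma filter_iota_enum_count N :
  [seq i <- iota 0 N | p i] = mkseq g (count p (iota 0 N)).
Proof.
elim: N => [//|N IHN].
rewrite -addn1 iotaD filter_cat count_cat IHN /= add0n addn0.
case: ifP => [pN|_]; last by rewrite cats0 addn0.
have [n gnN] := (gP N).1 pN.
have -> : count p (iota 0 N) = n by rewrite -gnN -size_filter filter_iota_enum size_mkseq.
by rewrite addn1 mkseqS cats1 gnN.
Qed.

End enumeration.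

Lemma enum_infinite (p : pred nat) : (forall N, exists2 i, (N <= i)%N & p i) ->
  exists g : nat -> nat,
    (forall n, (g n < g n.+1)%N) /\ (forall i, p i <-> exists n, g n = i).
Proof.
move=> p_inf; pose c k := count p (iota 0 k).
have cS k : c k.+1 = (c k + p k)%N by rewrite /c -addn1 iotaD count_cat /= addn0.
have c_mono : {homo c : m n / (m <= n)%N}.
  by apply: homo_leq leqnn leq_trans _ => k; rewrite cS leq_addr.
have c_unbounded n : exists k, (n < c k.+1)%N.
  elim: n => [|n [k nk]].
    by have [i _ pi] := p_inf 0%N; exists i; rewrite cS pi addn1.
  have [i ki pi] := p_inf k.+1; exists i; rewrite cS pi addn1 ltnS.
  exact: leq_trans nk (c_mono _ _ ki).
pose g n := ex_minn (c_unbounded n).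
have g_spec n : c (g n) = n /\ p (g n).
  rewrite /g; case: ex_minnP => m nm m_min.
  have cm : (c m <= n)%N.
    case: m nm m_min => [//|m] _ m_min.
    by rewrite leqNgt; apply/negP => /m_min; rewrite ltnn.
  move: nm; rewrite cS; case: (p m) => /=; last by rewrite addn0 ltnNge cm.
  by rewrite addn1 ltnS => nm; split=> //; apply/eqP; rewrite eqn_leq cm.
exists g; split=> [n|i].
  rewrite ltnNge; apply/negP => /c_mono.
  by rewrite (g_spec n).1 (g_spec n.+1).1 ltnn.
split=> [pi|[n <-]]; last by case: (g_spec n).
have [cg pg] := g_spec (c i); exists (c i); apply/eqP.
rewrite eqn_leq; apply/andP; split; rewrite leqNgt; apply/negP => /c_mono.
  by rewrite cS pi cg addn1 ltnn.
by rewrite cS pg cg addn1 ltnn.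
Qed.

Definition erase2 (s : nat -> three) (N : nat) : seq bool :=
  [seq (s i : nat) == 1%N | i <- iota 0 N & (s i : nat) != 2%N].

Definition non2_inf (s : nat -> three) : Prop :=
  forall N, exists2 i, (N <= i)%N & (s i : nat) != 2%N.

Definition deleted_in (sigma : seq bool) : set (words three) :=
  [set s | exists z, delete2 s z /\ cyl false sigma z].

Section delete2.
Variables (s : nat -> three) (z : nat -> bool).
Hypothesis s_z : delete2 s z.

Lemma delete2_non2_inf : non2_inf s.
Proof.
case: s_z => g [g_lt [gP _]] N; exists (g N); last by apply/gP; exists N.
elim: N => // N IHN; exact: leq_ltn_trans IHN (g_lt N).
Qed.

Lemma delete2_cyl sigma : cyl false sigma z <-> exists N, erase2 s N = sigma.
Proof.
case: s_z => g [g_lt [gP zE]].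
have erase2E N : erase2 s N = mkseq z (size (erase2 s N)).
  rewrite /erase2 (filter_iota_enum_count g_lt gP) size_map size_mkseq /mkseq -map_comp.
  by apply: eq_map => n /=; rewrite zE.
rewrite cylP; split => [zsigma|[N <-]]; last by rewrite -erase2E.
exists (g (size sigma)).
rewrite /erase2 (filter_iota_enum g_lt gP) -[in RHS]zsigma /mkseq -map_comp.
by apply: eq_map => n /=; rewrite zE.
Qed.

End delete2.

Lemma non2_inf_delete2 s : non2_inf s -> exists z, delete2 s z.
Proof.
move=> s_inf; have [g [g_lt gP]] := enum_infinite s_inf.
by exists (fun n => (s (g n) : nat) == 1%N), g.
Qed.

Lemma deleted_inE sigma :
  deleted_in sigma = [set s | non2_inf s /\ exists N, erase2 s N = sigma].
Proof.
apply/seteqP; split => s /= => [[z [s_z z_sigma]]|[s_inf s_sigma]].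
  by split; [exact: delete2_non2_inf s_z | exact/(delete2_cyl s_z)].
by have [z s_z] := non2_inf_delete2 s_inf; exists z; split => //; exact/(delete2_cyl s_z).
Qed.

Definition letter (b : bool) : three := inord b.
Definition two : three := inord 2.

Definition decode (c : three) : seq bool :=
  if (c : nat) == 2%N then [::] else [:: (c : nat) == 1%N].

Lemma three_cases (c : three) : c = two \/ exists b, c = letter b.
Proof.
case: c => -[|[|[|//]]] c3; [right; exists false | right; exists true | left];
  by apply/val_inj; rewrite /= inordK.
Qed.

Lemma decode2 : decode two = [::].
Proof. by rewrite /decode inordK. Qed.

Lemma decode_letter b : decode (letter b) = [:: b].
Proof. by rewrite /decode inordK //; case: b. Qed.

Lemma erase2S s N : erase2 s N.+1 = erase2 s N ++ decode (s N).
Proof.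
rewrite /erase2 -[N.+1]addn1 iotaD filter_cat map_cat add0n /= /decode.
by case: ifP => [/negbTE -> | /negbFE ->].
Qed.

Lemma erase2_shift s N : erase2 s N.+1 = decode (s 0%N) ++ erase2 (precomp succn s) N.
Proof.
rewrite /erase2 /= (iotaDl 1 0) filter_map /decode.
by case: ifP => [/negbTE -> | /negbFE ->] /=; rewrite -map_comp.
Qed.

Lemma eq_erase2 s s' N : (forall i, (i < N)%N -> s i = s' i) -> erase2 s N = erase2 s' N.
Proof.
elim: N => // N IHN ss'; rewrite !erase2S ss' // IHN // => i iN.
by rewrite ss' // ltnW.
Qed.

Lemma non2_inf_shift s : non2_inf s <-> non2_inf (precomp succn s).
Proof.
split => s_inf N; last by have [i Ni si] := s_inf N; exists i.+1 => //; exact: leqW.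
have [[|i] Ni si] := s_inf N.+1; first by [].
by exists i.
Qed.

Lemma erase2_consP s b sigma : (exists N, erase2 s N = b :: sigma) <->
  (s 0%N = two /\ exists N, erase2 (precomp succn s) N = b :: sigma) \/
  (s 0%N = letter b /\ exists N, erase2 (precomp succn s) N = sigma).
Proof.
split => [[[|N] //]|[[s0 [N sN]]|[s0 [N sN]]]]; last 2 first.
- by exists N.+1; rewrite erase2_shift s0 decode2.
- by exists N.+1; rewrite erase2_shift s0 decode_letter sN.
rewrite erase2_shift; case: (three_cases (s 0%N)) => [s0|[b' s0]]; rewrite s0.
  by rewrite decode2 => sN; left; split => //; exists N.
by rewrite decode_letter => -[<- sN]; right; split => //; exists N.
Qed.

Lemma deleted_in_cons b sigma : deleted_in (b :: sigma) =
  (starts_with two `&` precomp succn @^-1` deleted_in (b :: sigma)) `|`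
  (starts_with (letter b) `&` precomp succn @^-1` deleted_in sigma).
Proof.
rewrite !deleted_inE; apply/seteqP; split => s /=.
  by case=> /non2_inf_shift s_inf /erase2_consP [[s0 sN]|[s0 sN]]; [left|right].
by case=> -[s0 [/(non2_inf_shift s) s_inf sN]]; split=> //; apply/erase2_consP; [left|right].
Qed.

Lemma measurable_non2_inf : measurable (non2_inf : set (words three)).
Proof.
rewrite [non2_inf](_ : _ =
    \bigcap_N \bigcup_i [set s : words three | (N <= i)%N && ((s i : nat) != 2%N)]).
  apply: bigcapT_measurable => N; apply: bigcupT_measurable => i.
  by apply: (@measurable_finitely_determined _ _ i.+1) => x y xy /=; rewrite xy.
apply/seteqP; split => s s_inf N.
  by move=> _; have [i Ni si] := s_inf N; exists i => //; rewrite /= Ni si.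
by have [i _ /andP[]] := s_inf N I; exists i.
Qed.

Lemma measurable_deleted_in sigma : measurable (deleted_in sigma).
Proof.
rewrite deleted_inE [X in measurable X](_ : _ =
    non2_inf `&` \bigcup_N [set s : words three | erase2 s N = sigma]).
  apply: measurableI; first exact: measurable_non2_inf.
  apply: bigcupT_measurable => N; apply: (@measurable_finitely_determined _ _ N).
  by move=> x y xy <-; apply/esym/eq_erase2.
by apply/seteqP; split => s [s_inf [N sN]]; split => //; exists N.
Qed.

Definition label_index (y : nat -> bool) (n : nat) : nat := (node_index (mkseq y n.+1)).-1.

Lemma binval_rcons s (b : bool) : binval (rcons s b) = ((binval s).*2 + b)%N.
Proof. by rewrite /binval foldl_rcons. Qed.

Lemma binval_lt s : (binval s < 2 ^ size s)%N.
Proof.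
elim/last_ind: s => [//|s b IHs]; rewrite binval_rcons size_rcons expnS -muln2.
by case: b; lia.
Qed.

Lemma label_index_lt y n : (label_index y n < label_index y n.+1)%N.
Proof.
rewrite /label_index /node_index (mkseqS y n.+1) binval_rcons size_rcons size_mkseq.
have := binval_lt (mkseq y n.+1); rewrite size_mkseq !expnS -muln2.
have : (0 < 2 ^ n)%N by rewrite expn_gt0.
by case: (y n.+1); lia.
Qed.

Lemma measurable_label_index n k : measurable [set y : words bool | label_index y n = k].
Proof.
apply: (@measurable_finitely_determined _ _ n.+1) => x y xy <-.
rewrite /label_index /mkseq; congr (node_index _).-1.
by apply/eq_in_map => i; rewrite mem_iota => /andP[_ /xy].
Qed.

Lemma measurable_labels :
  measurable_fun setT (fun p : words three * words bool => labels p.1 p.2 : words three).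
Proof. exact: measurable_precomp_prod measurable_label_index. Qed.

Section ternary_measure.
Local Open Scope ereal_scope.
Variables (R : realType) (lam3 : probability (words three) R).
Hypothesis lam3_cyl : forall t, lam3 (cyl point t) = ((#|three|%:R : R) ^- size t)%:E.

Lemma lam3_non2_inf : lam3 non2_inf = 1.
Proof.
pose tail2 N := [set s : words three | forall n, (N <= n)%N -> s n = two].
have finite_non2 : ~` non2_inf `<=` \bigcup_N tail2 N.
  move=> s s_fin; apply: contrapT => no_tail; apply: s_fin => N.
  apply: contrapT => no_non2; apply: no_tail; exists N => // n Nn.
  apply/val_inj; rewrite /= inordK //; apply/eqP/negPn/negP => sn2.
  by apply: no_non2; exists n.
have null_finite_non2 : lam3 (~` non2_inf) = 0.
  apply/eqP; rewrite -measure_le0.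
  have := measure_sigma_subadditive lam3 (measurable_eventually_const two)
    (measurableC measurable_non2_inf) finite_non2.
  by rewrite eseries0 // => N _ _; apply: (mu_eventually_const lam3_cyl); rewrite card_ord.
have := probability_setC lam3 (measurableC measurable_non2_inf).
by rewrite setCK null_finite_non2 sube0.
Qed.

Lemma lam3_deleted_in sigma : lam3 (deleted_in sigma) = ((2%:R : R) ^- size sigma)%:E.
Proof.
elim: sigma => [|b sigma IH].
  rewrite [deleted_in [::]](_ : _ = non2_inf) ?lam3_non2_inf ?expr0 ?invr1 //.
  by rewrite deleted_inE; apply/seteqP; split => [s []|s s_inf] //; split => //; exists 0%N.
have mD := measurable_deleted_in; have mS := measurable_starts_with.
have mP iota X := @measurable_precomp_preimage three iota X.
have third c X : measurable X ->
    lam3 (starts_with c `&` precomp succn @^-1` X) = ((3%:R : R)^-1)%:E * lam3 X.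
  by move=> mX; rewrite (mu_starts_with_shift lam3_cyl) // card_ord.
have disjoint_heads : (starts_with two `&` precomp succn @^-1` deleted_in (b :: sigma)) `&`
    (starts_with (letter b) `&` precomp succn @^-1` deleted_in sigma) = set0.
  apply/seteqP; split => // s [[s2 _] [sb _]]; move: s2; rewrite /starts_with /= sb.
  by move/(congr1 val); rewrite /= !inordK //; case: b {sb}.
have rec : lam3 (deleted_in (b :: sigma)) =
    ((3%:R : R)^-1)%:E * lam3 (deleted_in (b :: sigma)) +
    ((3%:R : R)^-1)%:E * lam3 (deleted_in sigma).
  rewrite {1}deleted_in_cons measureU //.
  - by congr (_ + _); apply: third.
  - by apply: measurableI; [exact: mS | exact: mP (mD _)].
  - by apply: measurableI; [exact: mS | exact: mP (mD _)].
move: rec; rewrite IH -(fineK (fin_num_measure lam3 _ (mD (b :: sigma)))) -!EFinM -EFinD.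
move=> [rec]; congr EFin; rewrite /= exprS invfM.
set x := fine _ in rec *; set y := (_ ^- size sigma)%R in rec *.
have : (3 * x = x + y)%R by rewrite {1}rec; field.
lra.
Qed.

Lemma lam3_labels_in y sigma :
  lam3 [set x | deleted_in sigma (labels x y)] = ((2%:R : R) ^- size sigma)%:E.
Proof.
rewrite -lam3_deleted_in -(mu_precomp lam3_cyl (label_index_lt y) (measurable_deleted_in _)).
by congr (lam3 _); apply/seteqP.
Qed.

End ternary_measure.

Local Open Scope ring_scope.
Local Open Scope ereal_scope.

Theorem lemma6p1 (R : realType)
  (lam : probability Cantor2 R) (lam3 : probability Cantor3 R)
  (hlam : forall s : seq bool, lam (cyl false s) = ((2%:R : R) ^- size s)%:E)
  (hlam3 : forall s : seq three,
      lam3 (cyl (@ord0 2 : three) s) = ((3%:R : R) ^- size s)%:E)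
  (sigma : seq bool) :
  \int[lam3]_x lam (F_preimage x sigma) = ((2%:R : R) ^- size sigma)%:E.
Proof.
have lam3_cyl (t : seq three) : lam3 (cyl point t) = ((#|three|%:R : R) ^- size t)%:E.
  by rewrite card_ord; exact: hlam3.
pose E : set (Cantor3 * Cantor2) := [set p | deleted_in sigma (labels p.1 p.2)].
have mE : measurable E.
  by rewrite -[E]setTI; apply: measurable_labels => //; exact: measurable_deleted_in.
transitivity (\int[lam3]_x (lam \o xsection E) x).
  apply: eq_integral => x _; congr (lam _).
  by apply/seteqP; split => y; rewrite /xsection /= in_setE.
rewrite -indic_fubini_tonelli_FE // indic_fubini_tonelli // indic_fubini_tonelli_GE //.
rewrite (eq_integral (fun=> ((2%:R : R) ^- size sigma)%:E)) => [|y _].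
  by rewrite integral_cst // [X in _ * X](_ : _ = 1) ?mule1 //; exact: probability_setT.
rewrite /= -(lam3_labels_in lam3_cyl y); congr (lam3 _).
by apply/seteqP; split => x; rewrite /ysection /= in_setE.
Qed.
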